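(* Let $(M,d)$ be a complete separable metric space. Then $c_0$ bi-Lipschitzly embeds into $M$ if and only if $\mathrm{I}^{\mathrm{Lip}}_{c_0}(M)\ge\omega_1$.
   Context: For finite $G\subset\mathbb{N}$ and countable $\mathbb{E}\subset\mathbb{R}$ with $0\in\mathbb{E}$, $[\mathbb{E},G]=\{f:\mathbb{N}\to\mathbb{E}:\mathrm{supp}(f)\subset G\}$, viewed as a subset of $c_0$. $\mathbb{E}$-bunches, the order $\preceq$ (for $\chi=(x_f)_{f\in[\mathbb{E},F]}$, $\psi=(y_f)_{f\in[\mathbb{E},G]}$: $F$ is an initial segment of $G$ and $y_f=x_f$ on $[\mathbb{E},F]$), $\mathbb{E}$-vines (sets of bunches closed under $\preceq$-predecessors), derivatives $\mathcal{V}^{(1)}=\mathcal{V}\setminus\{\preceq\text{-maximal elements}\}$, $\mathcal{V}^{(\alpha+1)}=(\mathcal{V}^{(\alpha)})^{(1)}$, $\mathcal{V}^{(\alpha)}=\bigcap_{\beta<\alpha}\mathcal{V}^{(\beta)}$ at limits, and the index $o(\mathcal{V})=\min\{\alpha:\mathcal{V}^{(\alpha)}=\emptyset\}$ (with $o(\mathcal{V})=\infty\ge\omega_1$ if no such ordinal exists). For $C>0$, $\mathcal{V}(M,\mathbb{Q},C)$ is the set of all $(x_f)_{f\in[\mathbb{Q},G]}$, $G\in[\mathbb{N}]^{<\omega}$, $x_f\in M$, with $\frac1C\|f-g\|_\infty\le d(x_f,x_g)\le C\|f-g\|_\infty$ for all $f,g\in[\mathbb{Q},G]$. The Lipschitz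 $c_0$-index is $\mathrm{I}^{\mathrm{Lip}}_{c_0}(M)=\sup\{o(\mathcal{V}(M,\mathbb{Q},C)):C>0\}$. *)

From HB Require Import structures.
From mathcomp Require Import all_boot all_order all_algebra.
From mathcomp Require Import boolp classical_sets reals.
Set Implicit Arguments. Unset Strict Implicit. Unset Printing Implicit Defensive.
Import Order.TTheory GRing.Theory Num.Theory.
Local Open Scope ring_scope.
Local Open Scope classical_set_scope.

Section Defs.
Variable R : realType.

Definition is_metric (M : Type) (d : M -> M -> R) : Prop :=
  (forall x y, d x y = 0 <-> x = y) /\
  (forall x y, d x y = d y x) /\
  (forall x y z, d x z <= d x y + d y z).

Definition metric_complete (M : Type) (d : M -> M -> R) : Prop :=
  forall u : nat -> M,
    (forall e, 0 < e -> exists N, forall m n, (N <= m)%N -> (N <= n)%N ->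
        d (u m) (u n) < e) ->
    exists l, forall e, 0 < e -> exists N, forall n, (N <= n)%N -> d (u n) l < e.

Definition metric_separable (M : Type) (d : M -> M -> R) : Prop :=
  exists D : M -> Prop,
    (exists g : M -> nat, forall x y, D x -> D y -> g x = g y -> x = y) /\
    (forall x e, 0 < e -> exists y, D y /\ d x y < e).

Definition in_c0 (x : nat -> R) : Prop :=
  forall e, 0 < e -> exists N, forall n, (N <= n)%N -> `|x n| < e.

Definition supnorm (x : nat -> R) : R := sup [set `|x n| | n in [set: nat]].

Definition c0_bilip_embeds (M : Type) (d : M -> M -> R) : Prop :=
  exists (F : (nat -> R) -> M) (a b : R), 0 < a /\ 0 < b /\
    forall x y, in_c0 x -> in_c0 y ->
      a * supnorm (fun n => x n - y n) <= d (F x) (F y) /\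
      d (F x) (F y) <= b * supnorm (fun n => x n - y n).

Definition in_QG (G : seq nat) (f : nat -> rat) : Prop :=
  forall n, f n != 0 -> n \in G.

Definition qdist (f g : nat -> rat) : R :=
  supnorm (fun n => ratr (f n) - ratr (g n)).

(* a bunch (x_f)_{f in [Q,G]} is represented by the finite set G (given as a
   list, only its members matter) and a map x, only its values on [Q,G]
   matter. *)
Record bunch (M : Type) := Bunch { bG : seq nat ; bx : (nat -> rat) -> M }.

Definition init_seg (F G : seq nat) : Prop :=
  (forall a, a \in F -> a \in G) /\
  (forall a b, a \in F -> b \in G -> (b < a)%N -> b \in F).

Definition bprec (M : Type) (chi psi : bunch M) : Prop :=
  init_seg (bG chi) (bG psi) /\
  forall f, in_QG (bG chi) f -> bx psi f = bx chi f.

Definition bprec_strict (M : Type) (chi psi : bunch M) : Prop :=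
  bprec chi psi /\ exists b, b \in bG psi /\ b \notin bG chi.

Definition vderiv1 (M : Type) (V : bunch M -> Prop) : bunch M -> Prop :=
  fun chi => V chi /\ exists psi, V psi /\ bprec_strict chi psi.

Definition VMQC (M : Type) (d : M -> M -> R) (C : R) : bunch M -> Prop :=
  fun chi => forall f g, in_QG (bG chi) f -> in_QG (bG chi) g ->
    C^-1 * qdist f g <= d (bx chi f) (bx chi g) /\
    d (bx chi f) (bx chi g) <= C * qdist f g.

(* Ordinals are represented by elements of well-ordered types: the element w
   of a strict well-order (W,lt) stands for the order type of {v | lt v w}. *)
Definition imm_pred (W : Type) (lt : W -> W -> Prop) (v w : W) : Prop :=
  lt v w /\ forall u, lt v u -> ~ lt u w.

Definition vderiv_step (M W : Type) (lt : W -> W -> Prop) (V : bunch M -> Prop)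
  (w : W) (rec : forall v, lt v w -> bunch M -> Prop) : bunch M -> Prop :=
  fun chi =>
    ((~ exists v, lt v w) -> V chi) /\
    (forall v (h : lt v w), imm_pred lt v w -> vderiv1 (rec v h) chi) /\
    ((exists v, lt v w) -> (~ exists v, imm_pred lt v w) ->
       forall v (h : lt v w), rec v h chi).

Definition vderiv (M W : Type) (lt : W -> W -> Prop) (wf : well_founded lt)
  (V : bunch M -> Prop) : W -> bunch M -> Prop :=
  Fix wf (fun _ => bunch M -> Prop) (@vderiv_step M W lt V).

Definition countable_strict_wellorder (W : Type) (lt : W -> W -> Prop) : Prop :=
  (forall a b c, lt a b -> lt b c -> lt a c) /\
  (forall a b, lt a b \/ a = b \/ lt b a) /\
  (exists g : W -> nat, injective g).

(* I^Lip_{c0}(M) >= omega_1, i.e. sup_{C>0} o(V(M,Q,C)) >= omega_1, i.e.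
   for every countable ordinal alpha there is C > 0 with o(V(M,Q,C)) > alpha,
   i.e. V(M,Q,C)^{(alpha)} <> empty. *)
Definition Lip_c0_index_ge_omega1 (M : Type) (d : M -> M -> R) : Prop :=
  forall (W : Type) (lt : W -> W -> Prop) (wf : well_founded lt),
    countable_strict_wellorder lt ->
    forall w : W, exists C : R, 0 < C /\ exists chi, vderiv wf (VMQC d C) w chi.

End Defs.

Set Warnings "-notation-overridden,-ambiguous-paths".
From HB Require Import structures.
From mathcomp Require Import all_boot all_order all_algebra.
From mathcomp Require Import boolp classical_sets reals.
From mathcomp Require Import lra.
Set Implicit Arguments. Unset Strict Implicit. Unset Printing Implicit Defensive.
Import Order.TTheory GRing.Theory Num.Theory.

(* Easy direction.  If F : c_0 -> M is bi-Lipschitz, the bunches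
   (F f)_{f in [Q,G]} all lie in V(M,Q,C) for one C, and they have no
   maximal element; such a family survives every derivative.

   Fix a countable dense set D coded
   injectively in nat.  A bunch chi is coded by a finite sequence piL chi
   whose i-th entry records the first i coordinates of chi and codes of
   D-approximations, at precision 1/(i+1), of its values on the grid of
   step 1/(i+1); strict extension of bunches strictly extends codes.  The
   prefixes of n :: piL chi, for chi in V(M,Q,n), form a tree on nat.  If
   it had no infinite branch, its Kleene-Brouwer order would be a countable
   well-order along which chi |-> n :: piL chi decreases, bounding every
   derivative index and contradicting the hypothesis.  An infinite branch
   yields n and bunches chi_m in V(M,Q,n) whose codes agree up to length m;
   the points of chi_m at the grid quantizations of x in c_0 form a Cauchy
   sequence, and their limits F x give a bi-Lipschitz embedding. *)

(* The Kleene-Brouwer order on finite sequences of naturals: [s] is below [t]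
   if [s] strictly extends [t], or if at the first place where they differ
   the entry of [s] is smaller. *)
Fixpoint kb (s t : seq nat) : bool :=
  match s, t with
  | s0, [::] => s0 != [::]
  | [::], _ :: _ => false
  | a :: s', b :: t' => (a < b) || ((a == b) && kb s' t')
  end.

Lemma kb_irr s : kb s s = false.
Proof. by elim: s => [|a s IH] //=; rewrite ltnn eqxx IH. Qed.

Lemma kb_trans s t u : kb s t -> kb t u -> kb s u.
Proof.
elim: u s t => [|c u IH] [|a s] [|b t] //=.
move=> /orP [ab|/andP [/eqP eab st]] /orP [bc|/andP [/eqP ebc tu]].
- by rewrite (ltn_trans ab bc).
- by subst c; rewrite ab.
- by subst b; rewrite bc.
- by subst b c; rewrite eqxx (IH _ _ st tu) orbT.
Qed.

Lemma kb_total s t : s <> t -> kb s t \/ kb t s.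
Proof.
elim: s t => [|a s IH] [|b t] //=; [by right|by left|].
move=> neq; case: (ltngtP a b) => [ab|ba|eab]; [by left|by right|].
subst b; rewrite ?eqxx ?ltnn /=; case: (IH t) => [st|st|st]; [|by left|by right].
by move: st neq => ->.
Qed.

Lemma kb_cat t r r' : kb (t ++ r) (t ++ r') = kb r r'.
Proof. by elim: t => [|a t IH] //=; rewrite ltnn eqxx IH. Qed.

Lemma kb_catl t r : kb (t ++ r) t = (r != [::]).
Proof. by have := kb_cat t r [::]; rewrite cats0 => ->; case: r. Qed.

Lemma kb_left s t u : kb s (t ++ u) -> ~~ prefix t s -> kb s t.
Proof.
elim: t s => [|b t IH] [|a s] //=.
move=> /orP [ab|/andP [/eqP eab st]] np; first by rewrite ab.
by subst b; rewrite eqxx /= in np *; rewrite (IH _ st np) orbT.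
Qed.

Section KleeneBrouwer.
Variable T : seq nat -> Prop.
Hypothesis T_prefix : forall t s, prefix t s -> T s -> T t.

Definition ext (u t : seq nat) : Prop := T u /\ exists a, u = t ++ [:: a].
Definition kbT (s t : seq nat) : Prop := T s /\ T t /\ kb s t.

(* Induction along the extensions of [t], then along the last coordinate:
   every node extending [t] is accessible, provided the nodes to the left of
   [t] already are. *)
Lemma kb_acc_extensions t : Acc ext t ->
  (forall s, T s -> kb s t -> ~~ prefix t s -> Acc kbT s) ->
  forall r, T (t ++ r) -> Acc kbT (t ++ r).
Proof.
elim=> {}t _ IH Hleft.
have acc_child : forall a r, T (t ++ a :: r) -> Acc kbT (t ++ a :: r).
  elim/ltn_ind=> a IHa r Tr.
  have cat_child : t ++ a :: r = (t ++ [:: a]) ++ r by rewrite -catA.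
  have Tta : T (t ++ [:: a]).
    by apply: (T_prefix (s := t ++ a :: r)) => //; rewrite cat_child prefix_prefix.
  have left_of_child : forall s, T s -> kb s (t ++ [:: a]) ->
      ~~ prefix (t ++ [:: a]) s -> Acc kbT s.
    move=> s Ts ks nps; case ps: (prefix t s); last first.
      by apply: Hleft => //; [apply: (kb_left ks)|]; rewrite ps.
    move/prefixP: ps => [[|b r'] E]; subst s; first by rewrite kb_cat in ks.
    rewrite kb_cat /= in ks; move: nps.
    rewrite (prefix_catr _ _ (erefl (size t))) eqxx prefix_cons prefix0s andbT /=.
    case/orP: ks => [ba|/andP [/eqP -> _]]; last by rewrite eqxx.
    by move=> _; apply: IHa.
  have ext_a : ext (t ++ [:: a]) t by split=> //; exists a.
  by rewrite cat_child; apply: (IH _ ext_a left_of_child); rewrite -cat_child.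
case=> [|a r] Tr; last exact: acc_child.
rewrite cats0 in Tr *; constructor=> s [Ts [_ ks]].
case ps: (prefix t s); last by apply: Hleft => //; rewrite ps.
move/prefixP: ps => [[|a r'] E]; subst s; first by rewrite cats0 kb_irr in ks.
exact: acc_child.
Qed.

Lemma kb_wf_of_acc : Acc ext [::] -> forall s, T s -> Acc kbT s.
Proof.
move=> H s Ts; have no_left u : T u -> kb u [::] -> ~~ prefix [::] u -> Acc kbT u.
  by rewrite prefix0s.
exact: (kb_acc_extensions H no_left Ts).
Qed.

Definition node := {t : seq nat | T t}.
Definition kb_node (x y : node) : Prop := kb (proj1_sig x) (proj1_sig y).

Lemma node_inj (x y : node) : proj1_sig x = proj1_sig y -> x = y.
Proof. by case: x y => [x hx] [y hy] /= exy; subst y; congr exist; apply: Prop_irrelevance. Qed.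

Lemma kb_node_wf : Acc ext [::] -> well_founded kb_node.
Proof.
move=> HA; suff acc : forall t, Acc kbT t -> forall Tt : T t, Acc kb_node (exist _ t Tt).
  by move=> [t Tt]; apply: acc; apply: kb_wf_of_acc.
move=> t; elim=> {}t _ IH Tt; constructor => [[s Ts]] kst.
by apply: IH; split; [|split].
Qed.

Lemma kb_node_wellorder : countable_strict_wellorder kb_node.
Proof.
split; first by move=> a b c; apply: kb_trans.
split; last by exists (fun x => pickle (proj1_sig x)) => x y /(pcan_inj pickleK) /node_inj.
move=> a b; have [->|nab] := pselect (a = b); first by right; left.
have [e|h|h] := @kb_total (proj1_sig a) (proj1_sig b); [|by left|by right; right].
by case: nab; apply: node_inj.
Qed.

Lemma branch_of_not_acc : ~ Acc ext [::] ->
  exists b : nat -> seq nat, b 0%N = [::] /\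
    forall k, T (b k.+1) /\ exists a, b k.+1 = b k ++ [:: a].
Proof.
move=> nA.
have step : forall t : {t | ~ Acc ext t}, exists u : {u | ~ Acc ext u},
    ext (proj1_sig u) (proj1_sig t).
  case=> t nt /=; apply: contrapT => H; apply: nt; constructor => u eut.
  by apply: contrapT => nu; apply: H; exists (exist _ u nu).
pose next t := proj1_sig (cid (step t)).
pose path := fix p (k : nat) := if k is k'.+1 then next (p k') else exist _ [::] nA.
exists (fun k => proj1_sig (path k)); split => // k /=.
exact: (proj2_sig (cid (step (path k)))).
Qed.
End KleeneBrouwer.

Section Derivatives.
Variables (M W : Type) (lt : W -> W -> Prop) (wf : well_founded lt).
Variable V : bunch M -> Prop.

Lemma vderiv_eq w :
  vderiv wf V w = @vderiv_step M W lt V w (fun v _ => vderiv wf V v).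
Proof.
rewrite /vderiv Fix_eq // => x f g H.
by have -> : f = g by do 2 apply: functional_extensionality_dep => ?; apply: H.
Qed.

Lemma vderiv_no_maximal (P : bunch M -> Prop) :
  (forall chi, P chi -> V chi) ->
  (forall chi, P chi -> exists psi, P psi /\ bprec_strict chi psi) ->
  forall w chi, P chi -> vderiv wf V w chi.
Proof.
move=> PV Pext w; elim: (wf w) => {}w _ IH chi Pchi.
rewrite vderiv_eq; split; [|split].
- by move=> _; apply: PV.
- move=> v h _; split; first exact: IH.
  by have [psi [Ppsi st]] := Pext _ Pchi; exists psi; split => //; apply: IH.
- by move=> _ _ v h; apply: IH.
Qed.

Hypothesis lt_trans : forall a b c, lt a b -> lt b c -> lt a c.
Hypothesis lt_total : forall a b, lt a b \/ a = b \/ lt b a.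

Lemma vderiv_rank (pi : bunch M -> W) :
  (forall chi psi, V chi -> V psi -> bprec_strict chi psi -> lt (pi psi) (pi chi)) ->
  forall w chi, vderiv wf V w chi -> V chi /\ ~ lt (pi chi) w.
Proof.
move=> dec w; elim: (wf w) => {}w _ IH chi; rewrite vderiv_eq => -[H0 [Hs Hl]].
have [[v vw]|nv] := pselect (exists v, lt v w); last first.
  by split; [apply: H0|move=> h; apply: nv; exists (pi chi)].
have [[v' iv]|ni] := pselect (exists v, imm_pred lt v w).
  have [chiv [psi [Hpsi st]]] := Hs v' (proj1 iv) iv.
  have [Vc nc] := IH v' (proj1 iv) chi chiv.
  have [Vp np] := IH v' (proj1 iv) psi Hpsi.
  split => // lcw; have dd := dec _ _ Vc Vp st.
  case: (lt_total (pi psi) v') => [//|[e|vp]].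
    by subst v'; apply: (proj2 iv (pi chi)).
  by apply: (proj2 iv (pi chi)) => //; apply: (lt_trans vp dd).
have Hl' := Hl (ex_intro _ v vw) ni.
split; first exact: (proj1 (IH v vw chi (Hl' v vw))).
move=> uw; apply: ni; exists (pi chi); split => // u lu uw'.
exact: (proj2 (IH u uw' chi (Hl' u uw')) lu).
Qed.
End Derivatives.

Local Open Scope ring_scope.
Local Open Scope classical_set_scope.

Section SupNorm.
Variable R : realType.
Implicit Types v : nat -> R.

Lemma le_supnorm v B n : (forall k, `|v k| <= B) -> `|v n| <= supnorm v.
Proof.
move=> hB; apply: ub_le_sup; last by exists n.
by exists B => y [k _ <-].
Qed.

Lemma supnorm_le v e : (forall n, `|v n| <= e) -> supnorm v <= e.
Proof.
move=> he; apply: ge_sup; first by exists `|v 0%N|, 0%N.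
by move=> y [k _ <-].
Qed.

Lemma supnorm_ge0 v : 0 <= supnorm v.
Proof.
have [h|h] := pselect (has_sup [set `|v n| | n in [set: nat]]); last by rewrite /supnorm sup_out.
apply: (le_trans (normr_ge0 (v 0%N))).
by apply: (sup_upper_bound h); exists 0%N.
Qed.

Lemma supnorm0 v : (forall n, v n = 0) -> supnorm v = 0.
Proof.
move=> h; apply/eqP; rewrite eq_le supnorm_ge0 andbT.
by apply: supnorm_le => n; rewrite h normr0.
Qed.
End SupNorm.

Definition bnd (G : seq nat) : nat := \max_(a <- G) a.+1.

Lemma bnd_gt (G : seq nat) a : a \in G -> (a < bnd G)%N.
Proof. by move=> aG; apply: (leq_bigmax_seq a). Qed.

Lemma bnd_lt (G : seq nat) k : (k < bnd G)%N -> exists a, a \in G /\ (k <= a)%N.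
Proof.
move=> kG; apply: contrapT => none; move: kG; rewrite ltnNge => /negP; apply.
apply/bigmax_leqP_seq => a aG _; rewrite leqNgt; apply/negP => ka.
by apply: none; exists a.
Qed.

Lemma bnd_le (G : seq nat) m : (forall a, a \in G -> (a < m)%N) -> (bnd G <= m)%N.
Proof. by move=> H; apply/bigmax_leqP_seq => a aG _; apply: H. Qed.

Lemma in_QG_zero G (f : nat -> rat) n : in_QG G f -> (bnd G <= n)%N -> f n = 0.
Proof. by move=> hf hn; apply/eqP; apply: contraT => /hf /bnd_gt; rewrite ltnNge hn. Qed.

Lemma bunch_extend (M : Type) G (x : (nat -> rat) -> M) :
  bprec_strict (Bunch G x) (Bunch (rcons G (bnd G)) x).
Proof.
split; last first.
  exists (bnd G); rewrite /= mem_rcons in_cons eqxx; split => //.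
  by apply/negP => /bnd_gt; rewrite ltnn.
split=> //=; split=> [x' xG|a b aG]; first by rewrite mem_rcons in_cons xG orbT.
rewrite mem_rcons in_cons => /orP [/eqP ->|//] ba.
by have := bnd_gt aG; rewrite ltnNge (ltnW ba).
Qed.

Lemma VMQC_mono (R : realType) (M : Type) (d : M -> M -> R) (C C' : R) chi :
  0 < C -> C <= C' -> VMQC d C chi -> VMQC d C' chi.
Proof.
move=> C0 CC' V f g hf hg; have [h1 h2] := V f g hf hg.
have q0 : 0 <= qdist R f g by apply: supnorm_ge0.
have C'0 : 0 < C' by apply: lt_le_trans CC'.
split; last by apply: le_trans h2 _; apply: ler_wpM2r.
by apply: le_trans h1; apply: ler_wpM2r => //; rewrite lef_pV2 ?posrE.
Qed.

Section EasyDirection.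
Variables (R : realType) (M : Type) (d : M -> M -> R).

Lemma in_c0_QG G (f : nat -> rat) : in_QG G f -> in_c0 (fun n => (ratr (f n) : R)).
Proof. by move=> hf e e0; exists (bnd G) => n hn; rewrite (in_QG_zero hf hn) rmorph0 normr0. Qed.

Lemma embedding_bunch (F : (nat -> R) -> M) (a b : R) : 0 < a -> 0 < b ->
  (forall x y, in_c0 x -> in_c0 y ->
      a * supnorm (fun n => x n - y n) <= d (F x) (F y) /\
      d (F x) (F y) <= b * supnorm (fun n => x n - y n)) ->
  forall G, VMQC d (Num.max b a^-1) (Bunch G (fun f => F (fun n => ratr (f n)))).
Proof.
move=> a0 b0 hF G f g hf hg /=.
have [h1 h2] := hF _ _ (in_c0_QG hf) (in_c0_QG hg).
have q0 := supnorm_ge0 (fun n => (ratr (f n) : R) - ratr (g n)).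
split; last by apply: (le_trans h2); apply: ler_wpM2r => //; rewrite le_max lexx.
apply: le_trans h1; apply: ler_wpM2r => //.
rewrite -[a in _ <= a]invrK lef_pV2 ?posrE ?invr_gt0 ?lt_max ?b0 //.
by rewrite le_max lexx orbT.
Qed.

Lemma easy_direction : c0_bilip_embeds d -> Lip_c0_index_ge_omega1 d.
Proof.
move=> [F [a [b [a0 [b0 hF]]]]] W lt wf _ w.
pose Fq (f : nat -> rat) := F (fun n => ratr (f n)).
exists (Num.max b a^-1); split; first by rewrite lt_max b0.
exists (Bunch [::] Fq).
apply: (@vderiv_no_maximal _ _ _ wf _ (fun chi => bx chi = Fq)) => //.
  by case=> G x /= ->; apply: embedding_bunch.
by case=> G x /= ->; exists (Bunch (rcons G (bnd G)) Fq); split => //; apply: bunch_extend.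
Qed.
End EasyDirection.

Definition Gs (G : seq nat) : seq nat := [seq k <- iota 0 (bnd G) | k \in G].

Lemma mem_Gs G k : (k \in Gs G) = (k \in G).
Proof.
rewrite mem_filter mem_iota /= add0n; case kG: (k \in G) => //=.
by rewrite bnd_gt.
Qed.

Lemma uniq_Gs G : uniq (Gs G).
Proof. exact: filter_uniq (iota_uniq _ _). Qed.

Lemma Gs_init_seg F G : init_seg F G -> exists X, Gs G = Gs F ++ X.
Proof.
move=> [sub ini].
have le : (bnd F <= bnd G)%N by apply: bnd_le => a aF; apply: bnd_gt; apply: sub.
rewrite /Gs -(subnKC le) iotaD filter_cat add0n; eexists; congr (_ ++ _).
apply: eq_in_filter => k; rewrite mem_iota add0n /= => kF.
apply/idP/idP => [kG|/sub //].
have [a [aF ka]] := bnd_lt kF.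
case: (ltngtP k a) => [kla|akl|->] //; first exact: (ini a k aF kG kla).
by rewrite ltnNge ka in akl.
Qed.

Lemma Gs_strict (M : Type) (chi psi : bunch M) : bprec_strict chi psi ->
  exists X, X != [::] /\ Gs (bG psi) = Gs (bG chi) ++ X.
Proof.
move=> [[ini _] [b [bp bc]]]; have [X E] := Gs_init_seg ini; exists X; split => //.
apply/negP => /eqP X0; move: bp; rewrite -mem_Gs E X0 cats0 mem_Gs.
by rewrite (negbTE bc).
Qed.

Lemma take_cat_le (T : Type) i (s1 s2 : seq T) : (i <= size s1)%N ->
  take i (s1 ++ s2) = take i s1.
Proof.
rewrite take_cat; case: ltnP => // h1 h2.
have -> : i = size s1 by apply/eqP; rewrite eqn_leq h1 h2.
by rewrite subnn take0 cats0 take_size.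
Qed.

(* The grid at scale [i]: integer numerators of absolute value at most
   [(i+1)^2], i.e. the values [z / (i+1)] of absolute value at most [i+1]. *)
Definition vals (i : nat) : seq int :=
  [seq Posz k | k <- iota 0 (i.+1 ^ 2).+1] ++ [seq Negz k | k <- iota 0 (i.+1 ^ 2)].

Fixpoint tuples (i m : nat) : seq (seq int) :=
  if m is m'.+1 then [seq k :: t | k <- vals i, t <- tuples i m'] else [:: [::]].

Lemma mem_vals i z : (absz z <= i.+1 ^ 2)%N -> z \in vals i.
Proof.
rewrite /vals mem_cat; case: z => k hk.
  by apply/orP; left; apply/mapP; exists k => //; rewrite mem_iota add0n ltnS.
by apply/orP; right; apply/mapP; exists k => //; rewrite mem_iota add0n.
Qed.

Lemma mem_tuples i t :
  all (fun z => absz z <= i.+1 ^ 2)%N t -> t \in tuples i (size t).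
Proof.
elim: t => [|z t IH] // /andP [hz ht].
change (z :: t \in [seq k :: s | k <- vals i, s <- tuples i (size t)]).
by apply: (allpairs_f (fun k s => k :: s)); [apply: mem_vals|apply: IH].
Qed.

Definition mkf (i : nat) (G : seq nat) (t : seq int) : nat -> rat :=
  fun n => if n \in G then (nth 0 t (index n G))%:~R / (i.+1)%:R else 0.

Lemma mkf_supp i G t : in_QG G (mkf i G t).
Proof. by move=> n; rewrite /mkf; case: (n \in G); rewrite ?eqxx. Qed.

Section Coding.
Variables (R : realType) (M : Type) (d : M -> M -> R).
Variables (D : M -> Prop) (gD : M -> nat).
Hypothesis Ddense : forall x e, 0 < e -> exists y, D y /\ d x y < e.

Definition eps (i : nat) : R := (i.+1%:R)^-1.

Lemma eps_gt0 i : 0 < eps i.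
Proof. by rewrite invr_gt0 ltr0n. Qed.

Lemma approx_ex i y : exists z, D z /\ d y z < eps i.
Proof. exact: Ddense (eps_gt0 i). Qed.

Definition approx i y := proj1_sig (cid (approx_ex i y)).

Lemma approxP i y : D (approx i y) /\ d y (approx i y) < eps i.
Proof. exact: proj2_sig (cid (approx_ex i y)). Qed.

Definition code (chi : bunch M) (i : nat) : nat :=
  pickle (take i (Gs (bG chi)),
    [seq gD (approx i (bx chi (mkf i (take i (Gs (bG chi))) t))) | t <- tuples i i]).

Definition piL (chi : bunch M) : seq nat :=
  [seq code chi i | i <- iota 1 (size (Gs (bG chi)))].

Lemma piL_strict chi psi : bprec_strict chi psi ->
  exists r, r != [::] /\ piL psi = piL chi ++ r.
Proof.
move=> hs; have [[_ hx] _] := hs; have [X [XN E]] := Gs_strict hs.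
rewrite /piL E size_cat iotaD map_cat; eexists; split; last first.
  congr (_ ++ _); apply/eq_in_map => i; rewrite mem_iota => /andP [_ i2].
  rewrite /code E take_cat_le; last by rewrite -ltnS.
  congr pickle; congr pair; apply: eq_map => t; congr gD; congr approx.
  by apply: hx => n /mkf_supp /mem_take; rewrite mem_Gs.
by rewrite -size_eq0 size_map size_iota size_eq0.
Qed.

Definition code_tree (t : seq nat) : Prop :=
  exists (n : nat) chi, (0 < n)%N /\ VMQC d n%:R chi /\ prefix t (n :: piL chi).

Lemma code_tree_prefix t s : prefix t s -> code_tree s -> code_tree t.
Proof.
move=> pts [n [chi [n0 [V ps]]]]; exists n, chi; do 2 split => //.
exact: prefix_trans pts ps.
Qed.

Lemma code_tree_root : is_metric d -> inhabited M -> code_tree [::].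
Proof.
move=> hmet [m0]; exists 1%N, (Bunch [::] (fun _ => m0)); do 2 split => //.
move=> f g hf hg /=.
have -> : qdist R f g = 0.
  apply: supnorm0 => n.
  have fn : f n = 0 by apply/eqP; apply: contraT => /hf.
  have gn : g n = 0 by apply/eqP; apply: contraT => /hg.
  by rewrite fn gn rmorph0 subrr.
by rewrite !mulr0 (proj2 (proj1 hmet m0 m0) erefl) lexx.
Qed.
End Coding.

(* The index hypothesis applied to the one-point order gives a bunch, hence
   a point of [M]. *)
Lemma inhabited_of_index (R : realType) (M : Type) (d : M -> M -> R) :
  Lip_c0_index_ge_omega1 d -> inhabited M.
Proof.
move=> H.
have wfu : well_founded (fun _ _ : unit => False) by move=> x; constructor.
have cu : countable_strict_wellorder (fun _ _ : unit => False).
  by split=> //; split; [by do 2 case; right; left|exists (fun _ => 0%N) => [[] []]].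
have [C [_ [chi _]]] := H unit _ wfu cu tt.
by constructor; exact: (bx chi (fun _ => 0)).
Qed.

(* The heart of the hard direction: if the code tree had no infinite branch,
   its Kleene-Brouwer order would be a countable well-order bounding the
   derivative index of every [V(M,Q,C)], against the index hypothesis. *)
Lemma code_tree_ill_founded (R : realType) (M : Type) (d : M -> M -> R)
  (D : M -> Prop) (gD : M -> nat)
  (Ddense : forall x (e : R), 0 < e -> exists y, D y /\ d x y < e) :
  is_metric d -> Lip_c0_index_ge_omega1 d -> ~ Acc (ext (code_tree gD Ddense)) [::].
Proof.
set T := code_tree gD Ddense => hmet H HA.
have Tpref := @code_tree_prefix _ _ _ _ gD Ddense.
have T0 : T [::] by apply: code_tree_root => //; apply: inhabited_of_index H.
have [_ [tot _]] := kb_node_wellorder T.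
pose w0 : node T := exist _ [::] T0.
have [C [C0 [chi hchi]]] := H _ _ (kb_node_wf Tpref HA) (kb_node_wellorder T) w0.
pose nC := (Num.truncn C).+1.
have CnC : C <= nC%:R by rewrite ltW // truncnS_gt.
have TV psi : VMQC d C psi -> T (nC :: piL gD Ddense psi).
  by move=> Vp; exists nC, psi; split => //; split; [exact: VMQC_mono C0 CnC Vp|exact: prefix_refl].
pose pi (psi : bunch M) : node T :=
  if pselect (T (nC :: piL gD Ddense psi)) is left h then exist _ _ h else w0.
have piE psi : VMQC d C psi -> proj1_sig (pi psi) = nC :: piL gD Ddense psi.
  by move=> Vp; rewrite /pi; case: pselect => // h; case: h; apply: TV.
have dec a b : VMQC d C a -> VMQC d C b -> bprec_strict a b -> kb_node (pi b) (pi a).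
  move=> Va Vb st; rewrite /kb_node (piE _ Va) (piE _ Vb) /=.
  have [r [rN ->]] := piL_strict gD Ddense st.
  by rewrite ltnn eqxx kb_catl rN.
have [Vc] := vderiv_rank (fun a b c => @kb_trans _ _ _) tot dec hchi.
by rewrite /kb_node (piE _ Vc).
Qed.

(* Sequences in c_0 are bounded and eventually small, so for large [m]
   these estimates apply uniformly. *)
Section Quantization.
Variable R : realType.

Definition fl (m : nat) (r : R) : int := Num.floor (m.+1%:R * r).
Definition clip (m : nat) (z : int) : int := if (absz z <= m.+1 ^ 2)%N then z else 0.
Definition qv (m : nat) (z : int) : R := (clip m z)%:~R / m.+1%:R.

Lemma clip_bound m z : (absz (clip m z) <= m.+1 ^ 2)%N.
Proof. by rewrite /clip; case: ifP. Qed.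

Lemma scale_gt0 m : 0 < m.+1%:R :> R. Proof. by rewrite ltr0n. Qed.

Lemma qv_bound m z : `|qv m z| <= m.+1%:R.
Proof.
rewrite /qv normrM normfV (ger0_norm (ltW (scale_gt0 m))) ler_pdivrMr ?scale_gt0 //.
rewrite -intr_norm -natr_absz -natrM mulnn ler_nat.
exact: clip_bound.
Qed.

Lemma clip_fl m B r : 0 <= B -> B + 1 <= m.+1%:R -> `|r| <= B -> clip m (fl m r) = fl m r.
Proof.
move=> B0 Bk rB; set k : R := m.+1%:R; have k0 : 0 < k := scale_gt0 m.
have /andP [f1 f2] := floor_itv (k * r); rewrite intrD in f2.
move: rB; rewrite ler_norml => /andP [rB1 rB2].
have h1 : k * r <= k * B by apply: ler_wpM2l => //; apply: ltW.
have h2 : - (k * B) <= k * r by rewrite -mulrN; apply: ler_wpM2l => //; apply: ltW.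
have h3 : k * B + 1 <= k * k.
  have : k * (B + 1) <= k * k by apply: ler_wpM2l => //; apply: ltW.
  have : 1 <= k by rewrite ler1n.
  rewrite mulrDr mulr1; lra.
have zb : `|(fl m r)%:~R : R| <= k ^+ 2 by rewrite expr2 ler_norml; apply/andP; split; lra.
by rewrite /clip ifT //; move: zb; rewrite -intr_norm -natr_absz -natrX ler_nat.
Qed.

Lemma qv_acc m B r : 0 <= B -> B + 1 <= m.+1%:R -> `|r| <= B ->
  `|qv m (fl m r) - r| <= eps R m.
Proof.
move=> B0 Bk rB; set k : R := m.+1%:R; have k0 : 0 < k := scale_gt0 m.
have /andP [f1 f2] := floor_itv (k * r); rewrite intrD in f2.
rewrite /qv (clip_fl B0 Bk rB) /eps -/(fl m r) in f1 f2 *.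
have -> : (fl m r)%:~R / k - r = ((fl m r)%:~R - k * r) / k.
  by rewrite mulrBl mulrAC mulfV ?mul1r // gt_eqF.
rewrite normrM normfV (ger0_norm (ltW k0)) ler_pdivrMr // mulVf ?gt_eqF //.
rewrite ler_norml; apply/andP; split; lra.
Qed.

Lemma eps_ge0 m : 0 <= eps R m. Proof. exact: ltW (eps_gt0 R m). Qed.

Lemma eps_le m m' : (m <= m')%N -> eps R m' <= eps R m.
Proof. by move=> mm; rewrite /eps lef_pV2 ?posrE ?ltr0n // ler_nat. Qed.

Lemma dist3 (u w v z : R) : `|u - z| <= `|u - w| + `|w - v| + `|v - z|.
Proof. by apply: (le_trans (ler_distD w u z)); rewrite -addrA lerD2l ler_distD. Qed.

Lemma eps_eventually (e : R) : 0 < e -> exists N, forall m, (N <= m)%N -> eps R m <= e.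
Proof.
move=> e0; exists (Num.truncn e^-1) => m hm.
rewrite /eps -[e]invrK lef_pV2 ?posrE ?invr_gt0 ?ltr0n //.
by apply: ltW; apply: (lt_le_trans (truncnS_gt _)); rewrite ler_nat ltnS.
Qed.

Lemma grid_range_eventually (B : R) : exists N, forall m, (N <= m)%N -> B + 1 <= m.+1%:R.
Proof.
exists (Num.truncn (B + 1)) => m hm.
by apply: ltW; apply: (lt_le_trans (truncnS_gt _)); rewrite ler_nat ltnS.
Qed.

Lemma c0_tail (x : nat -> R) e : in_c0 x -> 0 < e ->
  exists N, forall l, (N <= l)%N -> `|x l| <= e.
Proof. by move=> hx e0; have [N hN] := hx e e0; exists N => l /hN /ltW. Qed.

Lemma c0_bounded (x : nat -> R) : in_c0 x -> exists B, 0 <= B /\ forall l, `|x l| <= B.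
Proof.
move=> hx; have [N hN] := c0_tail hx ltr01.
have [B [B0 hB]] : exists B, 0 <= B /\ forall l, (l < N)%N -> `|x l| <= B.
  elim: N {hN} => [|N [B [B0 hB]]]; first by exists 0.
  exists (B + `|x N|); split; first exact: addr_ge0.
  move=> l; rewrite ltnS leq_eqVlt => /orP [/eqP ->|lN]; first by rewrite lerDr.
  by apply: (le_trans (hB l lN)); rewrite lerDl.
exists (B + 1); split; first exact: addr_ge0.
move=> l; case: (ltnP l N) => lN.
  by apply: (le_trans (hB l lN)); rewrite lerDl.
by apply: (le_trans (hN l lN)); rewrite lerDr.
Qed.

Lemma c0_pair_eventually (x y : nat -> R) (e : R) : in_c0 x -> in_c0 y -> 0 < e ->
  exists B, 0 <= B /\ (forall l, `|x l| <= B) /\ (forall l, `|y l| <= B) /\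
  exists N, forall m, (N <= m)%N -> [/\ (1 <= m)%N, eps R m <= e, B + 1 <= m.+1%:R,
    (forall l, (m <= l)%N -> `|x l| <= e) & (forall l, (m <= l)%N -> `|y l| <= e)].
Proof.
move=> hx hy e0.
have [Bx [Bx0 hBx]] := c0_bounded hx; have [By [By0 hBy]] := c0_bounded hy.
exists (Bx + By); split; first exact: addr_ge0.
split; first by move=> l; apply: (le_trans (hBx l)); rewrite lerDl.
split; first by move=> l; apply: (le_trans (hBy l)); rewrite lerDr.
have [N1 h1] := eps_eventually e0; have [N2 h2] := grid_range_eventually (Bx + By).
have [N3 h3] := c0_tail hx e0; have [N4 h4] := c0_tail hy e0.
exists (maxn 1 (maxn (maxn N1 N2) (maxn N3 N4))) => m.
rewrite !geq_max => /andP [m1 /andP [/andP [m2 m3] /andP [m4 m5]]].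
split => //; [exact: h1|exact: h2| |].
  by move=> l ml; apply: h3; apply: leq_trans ml.
by move=> l ml; apply: h4; apply: leq_trans ml.
Qed.
End Quantization.
Arguments qv {R} m z.

Section BranchEmbedding.
Variables (R : realType) (M : Type) (d : M -> M -> R).
Hypothesis hmet : is_metric d.
Hypothesis hcomp : metric_complete d.
Variables (D : M -> Prop) (gD : M -> nat).
Hypothesis gDinj : forall x y, D x -> D y -> gD x = gD y -> x = y.
Hypothesis Ddense : forall x e, 0 < e -> exists y, D y /\ d x y < e.
Variables (n : nat) (a : nat -> nat) (chi_ : nat -> bunch M).
Hypothesis n0 : (0 < n)%N.
Hypothesis hV : forall m, VMQC d n%:R (chi_ m).
Hypothesis hsize : forall m, (m <= size (Gs (bG (chi_ m))))%N.
Hypothesis hcode : forall m j, (1 <= j <= m)%N -> code gD Ddense (chi_ m) j = a j.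

Lemma dsym x y : d x y = d y x. Proof. exact: (proj1 (proj2 hmet)). Qed.
Lemma dtri x y z : d x z <= d x y + d y z. Proof. exact: (proj2 (proj2 hmet)). Qed.

Definition coords j := take j (Gs (bG (chi_ j))).

Lemma code_agree m j : (1 <= j <= m)%N ->
  take j (Gs (bG (chi_ m))) = coords j /\
  [seq gD (approx Ddense j (bx (chi_ m) (mkf j (coords j) t))) | t <- tuples j j] =
  [seq gD (approx Ddense j (bx (chi_ j) (mkf j (coords j) t))) | t <- tuples j j].
Proof.
move=> /andP [j1 jm].
have := hcode (m:=m) (j:=j); rewrite j1 jm => /(_ isT).
rewrite -(hcode (m:=j) (j:=j)); last by rewrite j1 leqnn.
rewrite /code => /(pcan_inj pickleK) [E1 E2]; split; first exact: E1.
by rewrite E1 in E2.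
Qed.

Lemma coords_take m j : (j <= m)%N -> take j (Gs (bG (chi_ m))) = coords j.
Proof.
case: j => [|j] jm; first by rewrite /coords !take0.
by have [] := code_agree (m:=m) (j:=j.+1) jm.
Qed.

Lemma size_coords j : size (coords j) = j.
Proof.
rewrite /coords size_take; case: ltnP => // h.
by apply/eqP; rewrite eqn_leq h hsize.
Qed.

Lemma uniq_coords j : uniq (coords j).
Proof. exact: take_uniq (uniq_Gs _). Qed.

Definition coord l := nth 0%N (coords l.+1) l.

Lemma nth_coords j l : (l < j)%N -> nth 0%N (coords j) l = coord l.
Proof. by move=> lj; rewrite /coord -(coords_take (m:=j) (j:=l.+1)) // /coords !nth_take. Qed.

Lemma coordsP j k : reflect (exists2 l, (l < j)%N & k = coord l) (k \in coords j).
Proof.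
apply: (iffP idP) => [kG|[l lj ->]]; last by rewrite -(nth_coords lj) mem_nth // size_coords.
have lt_index : (index k (coords j) < j)%N by rewrite -{2}(size_coords j) index_mem.
by exists (index k (coords j)); rewrite // -(nth_coords lt_index) nth_index.
Qed.

Lemma index_coord j l : (l < j)%N -> index (coord l) (coords j) = l.
Proof. by move=> lj; rewrite -(nth_coords lj) index_uniq ?uniq_coords ?size_coords. Qed.

Lemma coord_inj l l' : coord l = coord l' -> l = l'.
Proof.
move=> e; have l1 : (l < (maxn l l').+1)%N by rewrite ltnS leq_maxl.
have l2 : (l' < (maxn l l').+1)%N by rewrite ltnS leq_maxr.
by rewrite -(index_coord l1) e index_coord.
Qed.

Lemma coords_sub j m k : (j <= m)%N -> k \in coords j -> k \in bG (chi_ m).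
Proof. by move=> jm; rewrite -(coords_take jm) => /mem_take; rewrite mem_Gs. Qed.

Lemma coords_mono j m k : (j <= m)%N -> k \in coords j -> k \in coords m.
Proof. by move=> jm /coordsP [l lj ->]; apply/coordsP; exists l => //; apply: leq_trans jm. Qed.

(* Equal codes force the grid values of [chi_ j] and [chi_ m] to be close:
   both lie within [eps j] of the same point of [D]. *)
Lemma grid_points_close j m t : (1 <= j <= m)%N -> t \in tuples j j ->
  d (bx (chi_ j) (mkf j (coords j) t)) (bx (chi_ m) (mkf j (coords j) t)) <= eps R j + eps R j.
Proof.
move=> jm tt; have [_ /eq_in_map E] := code_agree jm.
set u := bx (chi_ j) _; set v := bx (chi_ m) _.
have [Dv dv] := approxP Ddense j v; have [Du du] := approxP Ddense j u.
have same := gDinj Dv Du (E t tt).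
apply: ltW; apply: (le_lt_trans (dtri u (approx Ddense j u) v)).
by apply: ltrD => //; rewrite dsym -same.
Qed.

Definition tup m (x : nat -> R) : seq int := mkseq (fun l => clip m (fl m (x l))) m.
Definition am m (x : nat -> R) : nat -> rat := mkf m (coords m) (tup m x).
Definition pt m x := bx (chi_ m) (am m x).

Lemma tup_mem m x : tup m x \in tuples m m.
Proof.
have := @mem_tuples m (tup m x); rewrite size_mkseq; apply.
by apply/allP => z /mapP [l _ ->]; apply: clip_bound.
Qed.

Lemma am_coord m x l : (l < m)%N -> (ratr (am m x (coord l)) : R) = qv m (fl m (x l)).
Proof.
move=> lm; rewrite /am /mkf.
have -> : coord l \in coords m by apply/coordsP; exists l.
by rewrite index_coord // nth_mkseq // fmorph_div rmorph_int rmorph_nat.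
Qed.

Lemma am_out m x k : k \notin coords m -> am m x k = 0.
Proof. by rewrite /am /mkf => /negbTE ->. Qed.

Lemma am_bound m x k : `|ratr (am m x k) : R| <= m.+1%:R.
Proof.
case kG: (k \in coords m); last by rewrite am_out ?kG // rmorph0 normr0 ler0n.
by move/coordsP: kG => [l lm ->]; rewrite am_coord //; apply: qv_bound.
Qed.

Lemma am_QG m m' x : (m <= m')%N -> in_QG (bG (chi_ m')) (am m x).
Proof. by move=> mm k /mkf_supp; apply: coords_sub. Qed.

Lemma qdist_am_le m x y B : 0 <= B -> B + 1 <= m.+1%:R ->
  (forall l, `|x l| <= B) -> (forall l, `|y l| <= B) ->
  qdist R (am m x) (am m y) <= supnorm (fun l => x l - y l) + (eps R m + eps R m).
Proof.
move=> B0 Bk hx hy; apply: supnorm_le => k.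
case kG: (k \in coords m); last first.
  rewrite !am_out ?kG // rmorph0 subr0 normr0.
  by apply: addr_ge0; [apply: supnorm_ge0|apply: addr_ge0; apply: eps_ge0].
move/coordsP: kG => [l lm ->]; rewrite !am_coord //.
have s1 : `|x l - y l| <= supnorm (fun l => x l - y l).
  apply: (@le_supnorm _ _ (B + B)) => k0; apply: (le_trans (ler_normB _ _)).
  exact: lerD.
have a1 := qv_acc B0 Bk (hx l); have a2 := qv_acc B0 Bk (hy l).
rewrite distrC in a2.
have := dist3 (qv m (fl m (x l))) (x l) (y l) (qv m (fl m (y l))).
lra.
Qed.

Lemma supnorm_le_qdist m x y B e : 0 <= B -> B + 1 <= m.+1%:R ->
  (forall l, `|x l| <= B) -> (forall l, `|y l| <= B) ->
  (forall l, (m <= l)%N -> `|x l| <= e) -> (forall l, (m <= l)%N -> `|y l| <= e) ->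
  supnorm (fun l => x l - y l) <= qdist R (am m x) (am m y) + (eps R m + eps R m) + (e + e).
Proof.
move=> B0 Bk hx hy tx ty; apply: supnorm_le => l.
have q0 : 0 <= qdist R (am m x) (am m y) by apply: supnorm_ge0.
have e0 : 0 <= eps R m := eps_ge0 R m.
case: (ltnP l m) => lm; last first.
  have := ler_normB (x l) (y l); have := tx l lm; have := ty l lm; lra.
have s1 : `|qv m (fl m (x l)) - qv m (fl m (y l))| <= qdist R (am m x) (am m y).
  rewrite -!am_coord //; apply: (@le_supnorm _ _ (m.+1%:R + m.+1%:R)) => k0.
  by apply: (le_trans (ler_normB _ _)); apply: lerD; apply: am_bound.
have a1 := qv_acc B0 Bk (hx l); have a2 := qv_acc B0 Bk (hy l).
rewrite distrC in a1.
have := dist3 (x l) (qv m (fl m (x l))) (qv m (fl m (y l))) (y l).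
have ee : 0 <= e by apply: le_trans (tx m (leqnn m)).
lra.
Qed.

Lemma qdist_am_scales m m' x B e : (m <= m')%N -> 0 <= B -> B + 1 <= m.+1%:R ->
  (forall l, `|x l| <= B) -> (forall l, (m <= l)%N -> `|x l| <= e) ->
  qdist R (am m x) (am m' x) <= (eps R m + eps R m) + e.
Proof.
move=> mm B0 Bk hx tx; apply: supnorm_le => k.
have ee : 0 <= e by apply: le_trans (tx m (leqnn m)).
have e0 : 0 <= eps R m := eps_ge0 R m.
have em := eps_le R mm.
have Bk' : B + 1 <= m'.+1%:R by apply: (le_trans Bk); rewrite ler_nat ltnS.
case kG: (k \in coords m'); last first.
  rewrite !am_out ?kG //; last by apply/negP => /(coords_mono mm); rewrite kG.
  by rewrite rmorph0 subr0 normr0; lra.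
move/coordsP: kG => [l lm ->].
have a2 := qv_acc B0 Bk' (hx l).
case: (ltnP l m) => lm'.
  rewrite !am_coord //.
  have a1 := qv_acc B0 Bk (hx l); rewrite distrC in a2.
  have := ler_distD (x l) (qv m (fl m (x l))) (qv m' (fl m' (x l))).
  lra.
rewrite am_out; last first.
  by apply/negP => /coordsP [l' l'm /coord_inj el]; subst l'; rewrite ltnNge lm' in l'm.
rewrite rmorph0 add0r normrN am_coord //.
have := ler_distD (x l) (qv m' (fl m' (x l))) 0.
rewrite !subr0; have := tx l lm'; lra.
Qed.

Lemma pt_bilip m x y :
  (n%:R)^-1 * qdist R (am m x) (am m y) <= d (pt m x) (pt m y) /\
  d (pt m x) (pt m y) <= n%:R * qdist R (am m x) (am m y).
Proof. by apply: hV; apply: am_QG. Qed.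

Lemma pt_scales m m' x : (1 <= m)%N -> (m <= m')%N ->
  d (pt m x) (pt m' x) <= (eps R m + eps R m) + n%:R * qdist R (am m x) (am m' x).
Proof.
move=> m1 mm.
apply: (le_trans (dtri _ (bx (chi_ m') (am m x)) _)); apply: lerD.
  by apply: grid_points_close; [rewrite m1 mm|apply: tup_mem].
by have [] := hV (am_QG (x:=x) mm) (am_QG (x:=x) (leqnn m')).
Qed.

Definition conv (u : nat -> M) (L : M) :=
  forall e, 0 < e -> exists N, forall m, (N <= m)%N -> d (u m) L < e.

Lemma pt_converges x : in_c0 x -> exists L, conv (pt^~ x) L.
Proof.
move=> hx; apply: hcomp => e e0.
have nR0 : 0 <= n%:R :> R by [].
pose c : R := 3 + 3 * n%:R.
have c0 : 0 < c by rewrite /c; lra.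
have de0 : 0 < e / c by rewrite divr_gt0.
have ce : e = c * (e / c) by rewrite mulrC mulfVK // gt_eqF.
rewrite /c in ce.
have [B [B0 [hB [_ [N hN]]]]] := c0_pair_eventually hx hx de0.
suff H m m' : (N <= m)%N -> (m <= m')%N -> d (pt m x) (pt m' x) < e.
  exists N => m m' hm hm'; case: (leqP m m') => mm; first exact: H.
  by rewrite dsym; apply: H => //; apply: ltnW.
move=> hm mm; have [m1 em Bk tx _] := hN m hm.
have q := qdist_am_scales mm B0 Bk hB tx.
have s := pt_scales x m1 mm.
have : n%:R * qdist R (am m x) (am m' x) <= n%:R * (eps R m + eps R m + e / c).
  exact: ler_wpM2l.
move: s; set Q := qdist R _ _; set dd := d _ _.
have : n%:R * (eps R m) <= n%:R * (e / c) by apply: ler_wpM2l.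
have : 0 < e / c by [].
nra.
Qed.

Definition F (x : nat -> R) : M :=
  if pselect (exists L, conv (pt^~ x) L) is left h then proj1_sig (cid h) else pt 0 x.

Lemma F_conv x : in_c0 x -> conv (pt^~ x) (F x).
Proof.
move=> hx; rewrite /F; case: pselect => [h|h]; first exact: proj2_sig (cid h).
by case: h; apply: pt_converges.
Qed.

Lemma F_scale x y e : in_c0 x -> in_c0 y -> 0 < e -> exists m,
  [/\ d (pt m x) (F x) < e, d (pt m y) (F y) < e,
   qdist R (am m x) (am m y) <= supnorm (fun l => x l - y l) + (e + e) &
   supnorm (fun l => x l - y l) <= qdist R (am m x) (am m y) + (e + e) + (e + e)].
Proof.
move=> hx hy e0.
have [B [B0 [hBx [hBy [N hN]]]]] := c0_pair_eventually hx hy e0.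
have [N1 h1] := F_conv hx e0; have [N2 h2] := F_conv hy e0.
pose m := maxn N (maxn N1 N2).
have [m1 em Bk tx ty] := hN m (leq_maxl _ _).
exists m; split.
- by apply: h1; rewrite /m !leq_max leqnn !orbT.
- by apply: h2; rewrite /m !leq_max leqnn !orbT.
- by apply: (le_trans (qdist_am_le B0 Bk hBx hBy)); rewrite lerD2l lerD.
- apply: (le_trans (supnorm_le_qdist B0 Bk hBx hBy tx ty)).
  by rewrite lerD2r lerD2l lerD.
Qed.

Lemma F_lower x y : in_c0 x -> in_c0 y ->
  (n%:R)^-1 * supnorm (fun l => x l - y l) <= d (F x) (F y).
Proof.
move=> hx hy; set s := supnorm _.
have ni0 : 0 < (n%:R : R)^-1 by rewrite invr_gt0 ltr0n.
apply/ler_addgt0Pr => e e0.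
pose c : R := 2 + 4 * (n%:R)^-1.
have c0 : 0 < c by rewrite /c; lra.
have de0 : 0 < e / c by rewrite divr_gt0.
have ce : e = c * (e / c) by rewrite mulrC mulfVK // gt_eqF.
rewrite /c in ce.
have [m [d1 d2 _ q2]] := F_scale hx hy de0; rewrite -/s in q2.
have [b1 _] := pt_bilip m x y.
have t1 := dtri (pt m x) (F x) (pt m y).
have t2 := dtri (F x) (F y) (pt m y); rewrite (dsym (F y)) in t2.
have : (n%:R)^-1 * s <= (n%:R)^-1 * (qdist R (am m x) (am m y) + 4 * (e / c)).
  by apply: ler_wpM2l; [exact: ltW|lra].
lra.
Qed.

Lemma F_upper x y : in_c0 x -> in_c0 y ->
  d (F x) (F y) <= n%:R * supnorm (fun l => x l - y l).
Proof.
move=> hx hy; set s := supnorm _.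
have nR : 0 < n%:R :> R by rewrite ltr0n.
apply/ler_addgt0Pr => e e0.
pose c : R := 2 + 2 * n%:R.
have c0 : 0 < c by rewrite /c; lra.
have de0 : 0 < e / c by rewrite divr_gt0.
have ce : e = c * (e / c) by rewrite mulrC mulfVK // gt_eqF.
rewrite /c in ce.
have [m [d1 d2 q1 _]] := F_scale hx hy de0; rewrite -/s in q1.
have [_ b2] := pt_bilip m x y.
have t1 := dtri (F x) (pt m x) (F y); rewrite [d (F x) (pt m x)]dsym in t1.
have t2 := dtri (pt m x) (pt m y) (F y).
have : n%:R * qdist R (am m x) (am m y) <= n%:R * (s + 2 * (e / c)).
  by apply: ler_wpM2l; [exact: ltW|lra].
lra.
Qed.

Lemma embedding_of_coherent_bunches : c0_bilip_embeds d.
Proof.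
exists F, (n%:R)^-1, n%:R; split; first by rewrite invr_gt0 ltr0n.
split; first by rewrite ltr0n.
by move=> x y hx hy; split; [apply: F_lower|apply: F_upper].
Qed.
End BranchEmbedding.

Lemma prefix_code (R : realType) (M : Type) (d : M -> M -> R) (D : M -> Prop)
  (gD : M -> nat) (Ddense : forall x (e : R), 0 < e -> exists y, D y /\ d x y < e)
  (a : nat -> nat) m (n' : nat) (chi : bunch M) :
  prefix (mkseq a m.+1) (n' :: piL gD Ddense chi) ->
  [/\ n' = a 0%N, (m <= size (Gs (bG chi)))%N &
      forall j, (1 <= j <= m)%N -> code gD Ddense chi j = a j].
Proof.
move=> /prefixP [r E].
have Hn j : (j <= m)%N -> nth 0%N (n' :: piL gD Ddense chi) j = a j.
  by move=> jm; rewrite E nth_cat size_mkseq ltnS jm nth_mkseq // ltnS.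
have sz : (m <= size (Gs (bG chi)))%N.
  have := congr1 size E; rewrite size_cat size_mkseq addSn.
  by rewrite /= /piL size_map size_iota => -[->]; rewrite leq_addr.
split => //; first by have := Hn 0%N isT.
move=> [|j] // /andP [_ jm]; rewrite -(Hn _ jm) /= /piL.
rewrite (nth_map 0%N); last by rewrite size_iota; apply: leq_trans jm sz.
by rewrite nth_iota ?add1n //; apply: leq_trans jm sz.
Qed.

Lemma branch_mkseq (b : nat -> seq nat) : b 0%N = [::] ->
  (forall k, exists x, b k.+1 = b k ++ [:: x]) ->
  forall k, b k = mkseq (fun i => nth 0%N (b i.+1) i) k.
Proof.
move=> b0 hb; elim=> [|k IH] //; have [x E] := hb k.
rewrite mkseqS -IH -cats1 E; congr (_ ++ [:: _]).
by rewrite nth_cat IH size_mkseq ltnn subnn.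
Qed.

Lemma embedding_of_branch (R : realType) (M : Type) (d : M -> M -> R)
  (D : M -> Prop) (gD : M -> nat)
  (gDinj : forall x y, D x -> D y -> gD x = gD y -> x = y)
  (Ddense : forall x (e : R), 0 < e -> exists y, D y /\ d x y < e)
  (b : nat -> seq nat) :
  is_metric d -> metric_complete d -> b 0%N = [::] ->
  (forall k, code_tree gD Ddense (b k.+1) /\ exists x, b k.+1 = b k ++ [:: x]) ->
  c0_bilip_embeds d.
Proof.
move=> hmet hcomp b0 hb; pose a i := nth 0%N (b i.+1) i.
have bk := branch_mkseq b0 (fun k => proj2 (hb k)).
have ex m : exists chi, [/\ (0 < a 0%N)%N, VMQC d (a 0%N)%:R chi,
    (m <= size (Gs (bG chi)))%N &
    forall j, (1 <= j <= m)%N -> code gD Ddense chi j = a j].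
  have [n' [chi [n0 [V p]]]] := proj1 (hb m); rewrite bk in p.
  by have [e1 e2 e3] := prefix_code p; subst n'; exists chi; split.
pose chi_ m := proj1_sig (cid (ex m)).
have P m := proj2_sig (cid (ex m)).
have [n0 _ _ _] := P 0%N.
apply: (embedding_of_coherent_bunches hmet hcomp gDinj (n := a 0%N) (a := a) (chi_ := chi_) n0).
- by move=> m; have [] := P m.
- by move=> m; have [] := P m.
- by move=> m j hj; have [_ _ _ ->] := P m.
Qed.

Theorem proposition3p3 (R : realType) (M : Type) (d : M -> M -> R)
  (hmet : is_metric d) (hcomp : metric_complete d) (hsep : metric_separable d) :
  c0_bilip_embeds d <-> Lip_c0_index_ge_omega1 d.
Proof.
split=> [|index]; first exact: easy_direction.
have [D [[gD gDinj] Ddense]] := hsep.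
have [b [b0 hb]] := branch_of_not_acc (code_tree_ill_founded (gD := gD) (Ddense := Ddense) hmet index).
exact: (embedding_of_branch (Ddense := Ddense) gDinj hmet hcomp b0 hb).
Qed.
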